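(* Let $X\in\mathbb{R}^{m\times n}$, $\lambda>0$, and let $f:\mathbb{R}^{m\times n}\to\mathbb{R}$ be an arbitrary function. Consider the original R-PCA problem $$\min_{A,E\in\mathbb{R}^{m\times n}} \operatorname{rank}(A)+\lambda f(E)\quad\text{s.t.}\quad X=A+E, \tag{P}$$ and the relaxed R-LatLRR problem $$\min_{Z\in\mathbb{R}^{n\times n},\,L\in\mathbb{R}^{m\times m},\,E\in\mathbb{R}^{m\times n}} \|Z\|_*+\|L\|_*+\lambda f(E)\quad\text{s.t.}\quad X-E=(X-E)Z+L(X-E). \tag{U}$$ (i) Let $(A^*,E^* )$ be any optimal solution of (P), let $r=\operatorname{rank}(A^* )$, and let $A^*=U_{A^*}\Sigma_{A^*}V_{A^*}^T$ be its skinny SVD. Let $\widehat W\in\mathbb{R}^{r\times r}$ be any matrix such that (a) $\widehat W$ is block diagonal with blocks compatible with $\Sigma_{A^*}$, i.e., $[\Sigma_{A^*}]_{ii}\neq[\Sigma_{A^*}]_{jj}$ implies $\widehat W_{ij}=0$; and (b) both $\widehat W$ and $I-\widehat W$ are positive semi-definite. Then $(Z^*,L^*,E^* )$ is a minimizer of (U), where $$Z^*=V_{A^*}\widehat WV_{A^*}^T,\qquad L^*=U_{A^*}(I-\widehat W)U_{A^*}^T.$$ (ii) Conversely, if $(Z^*,L^*,E^* )$ is any optimal solution of (U), then $(X-E^*,E^* )$ is a minimizer of (P).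
   Context: $\|\cdot\|_*$ denotes the nuclear norm (sum of singular values). The skinny SVD of a matrix $A$ of rank $r$ is $A=U_A\Sigma_AV_A^T$ with $U_A,V_A$ having $r$ orthonormal columns and $\Sigma_A$ an $r\times r$ diagonal matrix with positive diagonal entries. $I$ denotes the identity matrix of the appropriate size. *)

(* Real matrices are modelled over an arbitrary real closed field R. *)
From HB Require Import structures.
From mathcomp Require Import all_boot all_order all_algebra.
From Stdlib Require Import ClassicalEpsilon.
Set Implicit Arguments. Unset Strict Implicit. Unset Printing Implicit Defensive.
Import Order.TTheory GRing.Theory Num.Theory.
Local Open Scope ring_scope.

Definition is_skinny_svd (R : rcfType) (m n k : nat) (A : 'M[R]_(m, n))
  (U : 'M[R]_(m, k)) (s : 'rV[R]_k) (V : 'M[R]_(n, k)) : Prop :=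
  [/\ U^T *m U = 1%:M, V^T *m V = 1%:M, (forall i, 0 < s 0 i)
    & A = U *m diag_mx s *m V^T].

Definition is_nuclear_norm (R : rcfType) (m n : nat) (A : 'M[R]_(m, n)) (t : R) : Prop :=
  exists k (U : 'M[R]_(m, k)) (s : 'rV[R]_k) (V : 'M[R]_(n, k)),
    is_skinny_svd A U s V /\ t = \sum_(i < k) s 0 i.

Definition nucnorm (R : rcfType) (m n : nat) (A : 'M[R]_(m, n)) : R :=
  epsilon (inhabits 0) (is_nuclear_norm A).

Definition psd (R : rcfType) (r : nat) (W : 'M[R]_r) : Prop :=
  W^T = W /\ forall x : 'cV[R]_r, 0 <= (x^T *m W *m x) 0 0.

Definition objP (R : rcfType) (m n : nat) (lam : R) (f : 'M[R]_(m, n) -> R)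
  (A E : 'M[R]_(m, n)) : R := (\rank A)%:R + lam * f E.

Definition minimizer_P (R : rcfType) (m n : nat) (X : 'M[R]_(m, n)) (lam : R)
  (f : 'M[R]_(m, n) -> R) (A E : 'M[R]_(m, n)) : Prop :=
  X = A + E /\
  forall A' E' : 'M[R]_(m, n), X = A' + E' -> objP lam f A E <= objP lam f A' E'.

Definition feasU (R : rcfType) (m n : nat) (X : 'M[R]_(m, n))
  (Z : 'M[R]_n) (L : 'M[R]_m) (E : 'M[R]_(m, n)) : Prop :=
  X - E = (X - E) *m Z + L *m (X - E).

Definition objU (R : rcfType) (m n : nat) (lam : R) (f : 'M[R]_(m, n) -> R)
  (Z : 'M[R]_n) (L : 'M[R]_m) (E : 'M[R]_(m, n)) : R :=
  nucnorm Z + nucnorm L + lam * f E.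

Definition minimizer_U (R : rcfType) (m n : nat) (X : 'M[R]_(m, n)) (lam : R)
  (f : 'M[R]_(m, n) -> R) (Z : 'M[R]_n) (L : 'M[R]_m) (E : 'M[R]_(m, n)) : Prop :=
  feasU X Z L E /\
  forall (Z' : 'M[R]_n) (L' : 'M[R]_m) (E' : 'M[R]_(m, n)),
    feasU X Z' L' E' -> objU lam f Z L E <= objU lam f Z' L' E'.

From HB Require Import structures.
From mathcomp Require Import all_boot all_order all_algebra.
From mathcomp Require Import complex ring lra.
From Stdlib Require Import ClassicalEpsilon.
Import Order.TTheory GRing.Theory Num.Theory.
Local Open Scope ring_scope.

(* For any factorisation [A = A Z + L A], reading [Z] and [L] in the singular
   bases [A = U diag(s) V^T] gives [rank A = tr (V^T Z V) + tr (U^T L U)], and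
   the trace of a matrix compressed between two matrices with orthonormal
   columns is at most its nuclear norm.  Hence [rank (X - E) <= ||Z||_* + ||L||_*]
   on the feasible set of (U): the objective of (U) dominates that of (P).  The
   bound is attained, for (ii) by [Z = V V^T], [L = 0] built from an SVD of any
   competitor [A], and for (i) by [Z*], [L*], whose nuclear norms are at most
   [tr W] and [tr (I - W)]. *)

Set Implicit Arguments.
Unset Strict Implicit.
Unset Printing Implicit Defensive.

Section Gram.
Variable R : rcfType.

Lemma gram_diagE m n (X : 'M[R]_(m, n)) i : (X^T *m X) i i = \sum_l X l i ^+ 2.
Proof. by rewrite mxE; apply: eq_bigr => l _; rewrite mxE expr2. Qed.

Lemma gram_diag_ge0 m n (X : 'M[R]_(m, n)) i : 0 <= (X^T *m X) i i.
Proof. by rewrite gram_diagE; apply: sumr_ge0 => l _; apply: sqr_ge0. Qed.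

Lemma gram_diag_eq0 m n (X : 'M[R]_(m, n)) i :
  (X^T *m X) i i = 0 -> forall l, X l i = 0.
Proof.
rewrite gram_diagE => /eqP; rewrite psumr_eq0 => [/allP H l|l _]; last exact: sqr_ge0.
by have := H l (mem_index_enum l); rewrite /= sqrf_eq0 => /eqP.
Qed.

Lemma row_norm2_ge0 n (v : 'rV[R]_n) : 0 <= (v *m v^T) 0 0.
Proof. by have := gram_diag_ge0 v^T 0; rewrite trmxK. Qed.

Lemma row_norm2_eq0 n (v : 'rV[R]_n) : (v *m v^T) 0 0 = 0 -> v = 0.
Proof.
rewrite -[v in v *m _]trmxK => /gram_diag_eq0 v0.
by apply/rowP => j; have := v0 j; rewrite !mxE.
Qed.

Lemma mul_mx_diagE m n (A : 'M[R]_(m, n)) d i j :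
  (A *m diag_mx d) i j = A i j * d 0 j.
Proof. by rewrite mul_mx_diag mxE. Qed.

Lemma mul_diag_mxE m n (A : 'M[R]_(m, n)) d i j :
  (diag_mx d *m A) i j = d 0 i * A i j.
Proof. by rewrite mul_diag_mx mxE. Qed.

Lemma diag_mx_comm_blockwise r (s : 'rV[R]_r) (W : 'M[R]_r) :
  (forall i j, s 0 i != s 0 j -> W i j = 0) -> diag_mx s *m W = W *m diag_mx s.
Proof.
move=> Wblk; apply/matrixP => i j; rewrite mul_diag_mxE mul_mx_diagE.
have [->|ne] := eqVneq (s 0 i) (s 0 j); first by rewrite mulrC.
by rewrite Wblk // mulr0 mul0r.
Qed.

End Gram.

Section Spectral.
Variable R : rcfType.

Lemma householder_reflection n (u : 'rV[R]_n.+1) : (u *m u^T) 0 0 = 1 ->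
  exists H : 'M_n.+1, [/\ H^T = H, H *m H = 1%:M & delta_mx 0 0 *m H = u].
Proof.
move=> uu.
set e0 : 'rV[R]_n.+1 := delta_mx 0 0.
set w := e0 - u; set c := (w *m w^T) 0 0; set P := w^T *m w; set k := 2 / c.
have dot_e0 (v : 'rV[R]_n.+1) : e0 *m v^T = (v 0 0)%:M.
  rewrite [LHS]mx11_scalar mxE (bigD1 0) //= big1 => [|j jn].
    by rewrite !mxE eqxx mul1r addr0.
  by rewrite !mxE (negPf jn) mul0r.
have dot_e0' (v : 'rV[R]_n.+1) : v *m e0^T = (v 0 0)%:M.
  by rewrite -[v *m _]trmxK trmx_mul trmxK dot_e0 tr_scalar_mx.
have ww : w *m w^T = c%:M by rewrite [LHS]mx11_scalar.
have PP : P *m P = c *: P by rewrite /P mulmxA -(mulmxA _ w) ww mul_mx_scalar scalemxAl.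
(* [c = |e0 - u|^2 = 2 - 2 u_0 = 2 w_0] since both vectors are unit vectors. *)
have cw : c = 2 * w 0 0.
  rewrite /c /w linearB /= mulmxBl !mulmxBr !dot_e0 dot_e0' [u *m u^T]mx11_scalar uu.
  by rewrite !mxE eqxx /=; ring.
exists (1%:M - k *: P); split.
- by rewrite linearB /= tr_scalar_mx linearZ /= /P trmx_mul trmxK.
- have [c0|cn0] := eqVneq c 0.
    by rewrite /k c0 invr0 mulr0 scale0r subr0 mulmx1.
  rewrite mulmxBl !mulmxBr mul1mx mulmx1 -scalemxAl mul1mx -scalemxAr PP !scalerA.
  have -> : k * k * c = k + k by rewrite /k; field.
  by rewrite scalerDl opprB addrK subrK.
- have [c0|cn0] := eqVneq c 0.
    rewrite /k c0 invr0 mulr0 scale0r subr0 mulmx1.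
    by have /eqP := row_norm2_eq0 c0; rewrite subr_eq0 => /eqP.
  rewrite mulmxBr mulmx1 -scalemxAr /P mulmxA dot_e0 mul_scalar_mx scalerA.
  have -> : k * w 0 0 = 1.
    move: cn0; rewrite /k cw mulf_eq0 negb_or => /andP[_ w0].
    by field.
  by rewrite scale1r /w opprB addrC subrK.
Qed.

(* A real symmetric matrix is hermitian over [R[i]], so its complex spectral
   decomposition provides a real eigenvalue, hence a real eigenvector. *)
Lemma symmetric_eigenvector n (M : 'M[R]_n.+1) : M^T = M ->
  exists a (v : 'rV_n.+1), v *m M = a *: v /\ v != 0.
Proof.
move=> Msym.
pose MC := map_mx (real_complex R) M.
have herm : MC \is hermsymmx.
  apply: realsym_hermsym.
    by rewrite qualifE /= expr0 scale1r map_mx_id // /MC map_trmx Msym.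
  by apply/mxOverP=> i j; rewrite mxE complex_real.
have /orthomx_spectralP eqM := hermitian_normalmx herm.
have dreal := hermitian_spectral_diag_real herm.
set P := spectralmx MC in eqM.
set d := spectral_diag MC in eqM dreal.
have Pu : P \in unitmx by apply: spectral_unit.
have ev : eigenvalue MC (d 0 0).
  apply/eigenvalueP; exists (row 0 P).
    rewrite rowE -mulmxA {1}eqM !mulmxA (mulmxK Pu) scalemxAl.
    congr (_ *m P); apply/rowP=> j; rewrite mul_mx_diag !mxE eqxx /=.
    by case: (eqVneq j 0) => [->|jn]; rewrite ?mul1r ?mulr1 // mul0r mulr0.
  apply/eqP=> r0.
  have : ('e_0 : 'rV[R[i]]_n.+1) = 0 by rewrite -(mulmxK Pu 'e_0) -rowE r0 mul0mx.
  by move/rowP/(_ 0); rewrite !mxE eqxx /= => /eqP; rewrite oner_eq0.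
have := mxOverP dreal 0 0.
case E: (d 0 0) => [a b]; rewrite complex_real => /eqP b0.
move: ev; rewrite E b0 complexr0 eigenvalue_root_char -map_char_poly fmorph_root.
rewrite -eigenvalue_root_char => /eigenvalueP [v vM vn0].
by exists a, v.
Qed.

Lemma delta_mx00_row n : (delta_mx 0 0 : 'rV[R]_(1 + n)) = row_mx 1%:M 0.
Proof.
apply/rowP=> j; rewrite !mxE; case: splitP => j' Hj; rewrite !mxE.
  by rewrite ord1 eqxx; have -> : j = 0 by apply: val_inj; rewrite /= Hj ord1.
by have -> : (j == 0) = false by apply/negP => /eqP E; move: Hj; rewrite E.
Qed.

Lemma symmetric_block_eigen n (B : 'M[R]_(1 + n)) a :
  B^T = B -> (delta_mx 0 0 : 'rV_(1 + n)) *m B = a *: delta_mx 0 0 ->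
  B = block_mx a%:M 0 0 (drsubmx B) /\ (drsubmx B)^T = drsubmx B.
Proof.
move=> Bs; rewrite -[B in _ *m B]submxK delta_mx00_row mul_row_block.
rewrite !mul1mx !mul0mx !addr0 (scale_row_mx a (1%:M : 'M_1) (0 : 'rV_n)).
rewrite scaler0 scalemx1 => /eq_row_mx [ul ur0].
move: Bs; rewrite -[B in B^T]submxK tr_block_mx -[B in _ = B]submxK.
move=> /eq_block_mx [_ dlur _ drs]; split=> //.
by rewrite -[B in LHS]submxK ul ur0 -[dlsubmx B]trmxK dlur ur0 trmx0.
Qed.

(* Induction on the size: conjugating by a Householder reflection that maps
   [e_0] to a unit eigenvector splits off a [1 x 1] diagonal block. *)
Theorem symmetric_spectral n (M : 'M[R]_n) : M^T = M ->
  exists (Q : 'M_n) (d : 'rV_n), Q^T *m Q = 1%:M /\ M = Q *m diag_mx d *m Q^T.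
Proof.
elim: n M => [|n IH] M Msym.
  by exists 1%:M, 0; split; rewrite [LHS]flatmx0 [RHS]flatmx0.
have [a [v [vM vn0]]] := symmetric_eigenvector Msym.
set t := (v *m v^T) 0 0.
have t_gt0 : 0 < t.
  by rewrite lt0r row_norm2_ge0 andbT; apply: contra vn0 => /eqP/row_norm2_eq0 ->.
set u := (Num.sqrt t)^-1 *: v.
have uu : (u *m u^T) 0 0 = 1.
  rewrite /u linearZ /= -scalemxAl -scalemxAr [LHS]mxE [_ 0 0]mxE -/t.
  rewrite -[t in _ * (_ * t)](sqr_sqrtr (ltW t_gt0)).
  by field; rewrite sqrtr_eq0 -ltNge.
have uM : u *m M = a *: u by rewrite -scalemxAl vM scalerA mulrC -scalerA.
have [H [Hs HH e0H]] := householder_reflection uu.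
pose B : 'M_(1 + n) := H *m M *m H.
have e0B : (delta_mx 0 0 : 'rV_(1 + n)) *m B = a *: delta_mx 0 0.
  by rewrite /B !mulmxA e0H uM -scalemxAl -e0H -mulmxA HH mulmx1.
have Bs : B^T = B by rewrite /B !trmx_mul Hs Msym mulmxA.
have [eB drs] := symmetric_block_eigen Bs e0B.
have [Q' [d' [Q'o eqdr]]] := IH _ drs.
pose K : 'M_(1 + n) := block_mx 1%:M 0 0 Q'.
have KK : K^T *m K = 1%:M.
  rewrite /K tr_block_mx mulmx_block !trmx0 !trmx1 Q'o !mulmx0 !mul0mx !mulmx1.
  by rewrite !addr0 !add0r -scalar_mx_block.
have KdK : K *m diag_mx (row_mx a%:M d') *m K^T = B.
  rewrite [RHS]eB diag_mx_row /K tr_block_mx !trmx0 !trmx1 !mulmx_block.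
  rewrite !mulmx0 !mul0mx !mulmx1 !mul1mx !addr0 !add0r eqdr.
  by rewrite mul0mx; congr block_mx; apply/matrixP => i j; rewrite !ord1 !mxE.
exists (H *m K), (row_mx a%:M d'); split.
  by rewrite trmx_mul mulmxA -(mulmxA K^T) Hs HH mulmx1 KK.
rewrite trmx_mul Hs !mulmxA -(mulmxA _ K) -(mulmxA _ _ K^T) KdK /B.
by rewrite !mulmxA HH mul1mx -mulmxA HH mulmx1.
Qed.

End Spectral.

Section SkinnySVD.
Variable R : rcfType.

Section ColumnSelection.
Variables (n : nat) (J : {pred 'I_n}).

Definition selmx : 'M[R]_(n, #|J|) := \matrix_(i, j) (i == enum_val j)%:R.

Lemma selmxT_mul p (X : 'M[R]_(n, p)) j c : (selmx^T *m X) j c = X (enum_val j) c.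
Proof.
rewrite mxE (bigD1 (enum_val j)) //= big1 => [|i /negPf ne]; rewrite !mxE ?eqxx ?ne.
  by rewrite mul1r addr0.
by rewrite mul0r.
Qed.

Lemma mul_selmx p (X : 'M[R]_(p, n)) r j : (X *m selmx) r j = X r (enum_val j).
Proof. by rewrite -[X *m _]trmxK trmx_mul mxE selmxT_mul mxE. Qed.

Lemma selmx_orthonormal : selmx^T *m selmx = 1%:M.
Proof. by apply/matrixP=> i j; rewrite selmxT_mul !mxE (inj_eq enum_val_inj). Qed.

Lemma mul_selmx_selmxT p (X : 'M[R]_(p, n)) :
  (forall r i, i \notin J -> X r i = 0) -> X *m selmx *m selmx^T = X.
Proof.
move=> X0; apply/matrixP => r i; rewrite mxE.
under eq_bigr => j _ do rewrite mul_selmx !mxE.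
rewrite -(big_enum_val (fun x => X r x * (i == x)%:R)) /=.
have [iJ|iJ] := boolP (i \in J); last first.
  rewrite X0 // big1 // => x xJ.
  by rewrite (_ : (i == x) = false) ?mulr0 //; apply: contraNF iJ => /eqP ->.
rewrite (bigD1 i) //= eqxx mulr1 big1 ?addr0 // => x /andP[_ /negPf].
by rewrite eq_sym => ->; rewrite mulr0.
Qed.

End ColumnSelection.

(* Diagonalise [A^T A = Q diag d Q^T]; the singular values are the square roots
   of the nonzero [d_i], [V] keeps the corresponding columns of [Q], and
   [U = A V diag(s)^-1]. *)
Theorem skinny_svd_exists m n (A : 'M[R]_(m, n)) :
  exists k (U : 'M_(m, k)) (s : 'rV_k) (V : 'M_(n, k)), is_skinny_svd A U s V.
Proof.
have AAs : (A^T *m A)^T = A^T *m A by rewrite trmx_mul trmxK.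
have [Q [d [Qo eAA]]] := symmetric_spectral AAs.
set AQ := A *m Q.
have AQd : AQ^T *m AQ = diag_mx d.
  by rewrite /AQ trmx_mul -mulmxA (mulmxA A^T) eAA !mulmxA Qo mul1mx -mulmxA Qo mulmx1.
have d_ge0 i : 0 <= d 0 i by have := gram_diag_ge0 AQ i; rewrite AQd mxE eqxx.
pose J : {pred 'I_n} := fun i => d 0 i != 0.
pose S := selmx J; pose V := Q *m S.
pose s : 'rV_#|J| := \row_j Num.sqrt (d 0 (enum_val j)).
pose si : 'rV_#|J| := \row_j (s 0 j)^-1.
have sqrt_gt0 (j : 'I_#|J|) : 0 < Num.sqrt (d 0 (enum_val j)).
  by rewrite sqrtr_gt0 lt0r d_ge0 andbT; exact: (enum_valP j).
have s_gt0 j : 0 < s 0 j by rewrite mxE.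
have sis : diag_mx si *m diag_mx s = 1%:M.
  apply/matrixP=> i j; rewrite mul_diag_mxE !mxE.
  have [_|ne] := eqVneq i j; last by rewrite !mulr0n mulr0.
  by rewrite mulr1n mulVf // gt_eqF.
exists #|J|, (A *m V *m diag_mx si), s, V; split.
- rewrite !trmx_mul tr_diag_mx !mulmxA -(mulmxA _ A^T A) eAA !mulmxA.
  rewrite -(mulmxA _ Q^T Q) Qo mulmx1 -(mulmxA _ Q^T Q) Qo mulmx1.
  apply/matrixP=> j j'; rewrite mul_mx_diagE mul_selmx.
  rewrite -(mulmxA _ S^T) mul_diag_mxE selmxT_mul !mxE (inj_eq enum_val_inj).
  have [<-|_] := eqVneq j j'; last by rewrite mulr0 mul0r.
  move: (sqrt_gt0 j); set t := Num.sqrt _ => t_gt0.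
  rewrite -[d 0 _](sqr_sqrtr (d_ge0 (enum_val j))) -/t.
  by rewrite /= mulr1n; field; rewrite gt_eqF.
- by rewrite /V trmx_mul mulmxA -(mulmxA S^T) Qo mulmx1 selmx_orthonormal.
- exact: s_gt0.
- have AQS : AQ *m S *m S^T = AQ.
    apply: mul_selmx_selmxT => l i /negbNE/eqP di.
    by apply: (gram_diag_eq0 (X := AQ)); rewrite AQd mxE eqxx di.
  rewrite -(mulmxA _ (diag_mx si)) sis mulmx1 /V trmx_mul !mulmxA -/AQ AQS.
  by rewrite /AQ -mulmxA (mulmx1C Qo) mulmx1.
Qed.

Lemma svd_split_feasible m n r (A : 'M[R]_(m, n)) U (s : 'rV[R]_r) V (W : 'M[R]_r) :
  is_skinny_svd A U s V -> diag_mx s *m W = W *m diag_mx s ->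
  A = A *m (V *m W *m V^T) + (U *m (1%:M - W) *m U^T) *m A.
Proof.
move=> [UU VV _ eA] sW; rewrite [in RHS]eA.
rewrite !mulmxA -(mulmxA _ V^T V) VV mulmx1 -(mulmxA _ U^T U) UU mulmx1.
by rewrite -(mulmxA U) sW mulmxA -mulmxDl -!mulmxA -mulmxDr mulmxBl mul1mx addrC subrK.
Qed.

End SkinnySVD.

Section NuclearNorm.
Variable R : rcfType.

(* [1 - (V^T P)^T (V^T P)] is the Gram matrix of [(1 - V V^T) P], as
   [1 - V V^T] is an orthogonal projection. *)
Lemma orthonormal_compress_col_le1 p k j (P : 'M[R]_(p, k)) (V : 'M[R]_(p, j)) i :
  P^T *m P = 1%:M -> V^T *m V = 1%:M -> ((V^T *m P)^T *m (V^T *m P)) i i <= 1.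
Proof.
move=> PP VV.
have proj : (1%:M - V *m V^T)^T *m (1%:M - V *m V^T) = 1%:M - V *m V^T.
  rewrite [(_ - _)^T]linearB /= trmx1 trmx_mul trmxK mulmxBl mul1mx mulmxBr mulmx1.
  by rewrite mulmxA -(mulmxA V) VV mulmx1 subrr subr0.
have := gram_diag_ge0 ((1%:M - V *m V^T) *m P) i.
rewrite trmx_mul -mulmxA (mulmxA _ (1%:M - _)) proj mulmxBl mul1mx mulmxBr PP.
by rewrite trmx_mul trmxK !mulmxA !mxE eqxx subr_ge0.
Qed.

Lemma gram_cross_diag_le j k (a b : 'M[R]_(j, k)) i :
  (b^T *m a) i i <= ((a^T *m a) i i + (b^T *m b) i i) / 2.
Proof.
have := gram_diag_ge0 (a - b) i; rewrite !gram_diagE mxE.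
have -> : \sum_l (a - b) l i ^+ 2 =
    \sum_l a l i ^+ 2 + \sum_l b l i ^+ 2 - 2 * \sum_l (b^T i l * a l i).
  rewrite mulr_sumr -big_split -sumrB /=; apply: eq_bigr => l _.
  by rewrite !mxE; ring.
by rewrite ler_pdivlMr // subr_ge0; lra.
Qed.

(* Writing [a = V1^T P] and [b = V2^T Q], the trace is [\sum_i d_i (b^T a)_ii],
   and each [(b^T a)_ii] is at most one. *)
Lemma mxtrace_compress_le p q k j (P : 'M[R]_(p, k)) (Q : 'M[R]_(q, k)) (d : 'rV[R]_k)
  (V1 : 'M[R]_(p, j)) (V2 : 'M[R]_(q, j)) :
  P^T *m P = 1%:M -> Q^T *m Q = 1%:M -> (forall i, 0 <= d 0 i) ->
  V1^T *m V1 = 1%:M -> V2^T *m V2 = 1%:M ->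
  \tr (V1^T *m (P *m diag_mx d *m Q^T) *m V2) <= \sum_i d 0 i.
Proof.
move=> PP QQ d_ge0 VV1 VV2.
set a := V1^T *m P; set b := V2^T *m Q.
have -> : V1^T *m (P *m diag_mx d *m Q^T) *m V2 = a *m (diag_mx d *m b^T).
  by rewrite /a /b trmx_mul trmxK !mulmxA.
rewrite mxtrace_mulC /mxtrace; apply: ler_sum => i _.
rewrite -mulmxA mul_diag_mxE -[X in _ <= X]mulr1 ler_wpM2l //.
apply: (le_trans (gram_cross_diag_le a b i)).
have := orthonormal_compress_col_le1 i PP VV1.
have := orthonormal_compress_col_le1 i QQ VV2.
by rewrite -/a -/b ler_pdivrMr //; lra.
Qed.

Lemma svd_diagonalize p q k (Z : 'M[R]_(p, q)) (U : 'M_(p, k)) s V :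
  is_skinny_svd Z U s V -> U^T *m Z *m V = diag_mx s.
Proof. by case=> UU VV _ ->; rewrite !mulmxA UU mul1mx -mulmxA VV mulmx1. Qed.

Lemma nucnorm_svd p q k (Z : 'M[R]_(p, q)) (U : 'M_(p, k)) s V :
  is_skinny_svd Z U s V -> nucnorm Z = \sum_i s 0 i.
Proof.
move=> sv.
have ex : exists t, is_nuclear_norm Z t by exists (\sum_i s 0 i), k, U, s, V.
rewrite /nucnorm; have [k' [U' [s' [V' [sv' ->]]]]] := epsilon_spec (inhabits 0) _ ex.
have tr := svd_diagonalize sv; have tr' := svd_diagonalize sv'.
case: sv => UU VV s_gt0 eZ; case: sv' => UU' VV' s'_gt0 eZ'.
apply/le_anti/andP; split.
  by rewrite -mxtrace_diag -tr' eZ; apply: mxtrace_compress_le => // i; apply: ltW.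
by rewrite -mxtrace_diag -tr eZ'; apply: mxtrace_compress_le => // i; apply: ltW.
Qed.

Lemma nucnorm_spec p q (Z : 'M[R]_(p, q)) : exists k (U : 'M_(p, k)) s V,
  is_skinny_svd Z U s V /\ nucnorm Z = \sum_i s 0 i.
Proof.
have [k [U [s [V sv]]]] := skinny_svd_exists Z.
by exists k, U, s, V; split => //; apply: nucnorm_svd sv.
Qed.

Lemma mxtrace_compress_le_nucnorm p q j (Z : 'M[R]_(p, q))
    (V1 : 'M[R]_(p, j)) (V2 : 'M[R]_(q, j)) :
  V1^T *m V1 = 1%:M -> V2^T *m V2 = 1%:M -> \tr (V1^T *m Z *m V2) <= nucnorm Z.
Proof.
move=> VV1 VV2; have [k [U [s [V [[UU VV s_gt0 ->] ->]]]]] := nucnorm_spec Z.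
by apply: mxtrace_compress_le => // i; apply: ltW.
Qed.

Lemma rank_svd p q k (Z : 'M[R]_(p, q)) (U : 'M_(p, k)) s V :
  is_skinny_svd Z U s V -> \rank Z = k.
Proof.
move=> sv; have tr := svd_diagonalize sv; case: sv => _ _ s_gt0 eZ.
apply/eqP; rewrite eqn_leq; apply/andP; split.
  by rewrite eZ -mulmxA (leq_trans (mxrankM_maxl _ _)) // rank_leq_col.
have s_unit : diag_mx s \in unitmx.
  by rewrite unitmxE det_diag unitfE prodf_seq_neq0; apply/allP => i _; rewrite gt_eqF.
rewrite -{1}(mxrank_unit s_unit) -tr.
by rewrite (leq_trans (mxrankM_maxl _ _)) // mxrankM_maxr.
Qed.

Lemma psd_spectral r (W : 'M[R]_r) : psd W ->
  exists (G : 'M_r) (mu : 'rV_r),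
    [/\ G^T *m G = 1%:M, forall i, 0 <= mu 0 i & W = G *m diag_mx mu *m G^T].
Proof.
move=> [Ws W_ge0]; have [G [mu [GG eW]]] := symmetric_spectral Ws.
exists G, mu; split => // i.
have := W_ge0 (col i G); rewrite colE trmx_mul trmx_delta eW.
rewrite -!mulmxA (mulmxA G^T G) GG mul1mx (mulmxA G^T G) GG mul1mx.
by rewrite mulmxA -rowE -colE !mxE eqxx mulr1n.
Qed.

Lemma nucnorm_psd_conj_le p r (V : 'M[R]_(p, r)) (W : 'M[R]_r) :
  V^T *m V = 1%:M -> psd W -> nucnorm (V *m W *m V^T) <= \tr W.
Proof.
move=> VV /psd_spectral [G [mu [GG mu_ge0 ->]]].
have [k [U [s [V' [sv ->]]]]] := nucnorm_spec (V *m (G *m diag_mx mu *m G^T) *m V^T).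
have VG : (V *m G)^T *m (V *m G) = 1%:M.
  by rewrite trmx_mul mulmxA -(mulmxA G^T) VV mulmx1 GG.
rewrite mxtrace_mulC mulmxA GG mul1mx mxtrace_diag -(mxtrace_diag s) -(svd_diagonalize sv).
have [UU VV' _ _] := sv.
have -> : V *m (G *m diag_mx mu *m G^T) *m V^T = V *m G *m diag_mx mu *m (V *m G)^T.
  by rewrite trmx_mul !mulmxA.
exact: mxtrace_compress_le.
Qed.

Lemma nucnorm0 p q : nucnorm (0 : 'M[R]_(p, q)) = 0.
Proof.
have sv0 : is_skinny_svd (0 : 'M[R]_(p, q)) (0 : 'M_(p, 0)) 0 0.
  by split => [||[]|]; rewrite ?mul0mx // [LHS]flatmx0 [RHS]flatmx0.
by rewrite (nucnorm_svd sv0) big_ord0.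
Qed.

Lemma nucnorm_orthoproj p k (V : 'M[R]_(p, k)) :
  V^T *m V = 1%:M -> nucnorm (V *m V^T) = k%:R.
Proof.
move=> VV; have sv : is_skinny_svd (V *m V^T) V (const_mx 1) V.
  by split => // [i|]; rewrite ?mxE ?ltr01 // diag_const_mx mulmx1.
rewrite (nucnorm_svd sv); under eq_bigr do rewrite mxE.
by rewrite sumr_const card_ord.
Qed.

(* In the basis of the singular vectors of [A], the identity [A = A Z + L A]
   becomes [s_i = s_i (V^T Z V)_ii + (U^T L U)_ii s_i] on the diagonal; dividing
   by [s_i > 0] and summing gives [rank A = tr (V^T Z V) + tr (U^T L U)]. *)
Lemma rank_le_nucnorm_add m n (A : 'M[R]_(m, n)) (Z : 'M_n) (L : 'M_m) :
  A = A *m Z + L *m A -> (\rank A)%:R <= nucnorm Z + nucnorm L.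
Proof.
move=> eA; have [k [U [s [V sv]]]] := skinny_svd_exists A.
rewrite (rank_svd sv); have tr := svd_diagonalize sv; case: sv => UU VV s_gt0 eUV.
have tZ := mxtrace_compress_le_nucnorm Z VV VV.
have tL := mxtrace_compress_le_nucnorm L UU UU.
suff -> : (k%:R : R) = \tr (V^T *m Z *m V) + \tr (U^T *m L *m U) by lra.
have key : diag_mx s = diag_mx s *m (V^T *m Z *m V) + (U^T *m L *m U) *m diag_mx s.
  rewrite -{1}tr {1}eA mulmxDr mulmxDl eUV; congr (_ + _).
    by rewrite !mulmxA UU mul1mx.
  by rewrite !mulmxA -[_ *m V^T *m V]mulmxA VV mulmx1.
rewrite /mxtrace -big_split /= -[k in k%:R]card_ord -sumr_const.
apply: eq_bigr => i _; apply: (mulfI (lt0r_neq0 (s_gt0 i))).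
have := congr1 (fun M : 'M[R]_k => M i i) key.
rewrite /= [X in X = _]mxE eqxx mulr1n mxE mul_mx_diagE mul_diag_mxE mulr1 => eqi.
by rewrite {1}eqi; ring.
Qed.

End NuclearNorm.

Section RobustPCA.
Variables (R : rcfType) (m n : nat) (X : 'M[R]_(m, n)) (lam : R).
Variable f : 'M[R]_(m, n) -> R.

Lemma objP_le_objU Z L E : feasU X Z L E -> objP lam f (X - E) E <= objU lam f Z L E.
Proof. by move=> /rank_le_nucnorm_add; rewrite /objP /objU lerD2r. Qed.

Lemma rpca_minimizer_latlrr (Astar Estar : 'M[R]_(m, n)) r U (s : 'rV[R]_r) V
    (W : 'M[R]_r) :
  minimizer_P X lam f Astar Estar -> is_skinny_svd Astar U s V ->
  (forall i j, s 0 i != s 0 j -> W i j = 0) -> psd W -> psd (1%:M - W) ->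
  minimizer_U X lam f (V *m W *m V^T) (U *m (1%:M - W) *m U^T) Estar.
Proof.
move=> [XAE Aopt] sv Wblk W_psd IW_psd.
have XE : X - Estar = Astar by rewrite XAE addrK.
have feas : feasU X (V *m W *m V^T) (U *m (1%:M - W) *m U^T) Estar.
  by rewrite /feasU XE; apply: svd_split_feasible sv (diag_mx_comm_blockwise Wblk).
split=> // Z' L' E' feas'.
have [UU VV _ _] := sv.
have bZ := nucnorm_psd_conj_le VV W_psd; have bL := nucnorm_psd_conj_le UU IW_psd.
have trW : \tr W + \tr (1%:M - W) = r%:R.
  by rewrite [\tr (_ - _)]linearB /= mxtrace1 addrC subrK.
have := Aopt _ _ (esym (subrK E' X)); have := objP_le_objU feas'.
rewrite /objP /objU (rank_svd sv) -trW => hU hP.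
apply: le_trans hU; apply: le_trans hP.
by rewrite lerD2r lerD.
Qed.

Lemma latlrr_minimizer_rpca Z L E :
  minimizer_U X lam f Z L E -> minimizer_P X lam f (X - E) E.
Proof.
move=> [feas Uopt]; split => [|A' E' XAE]; first by rewrite subrK.
have [k [U [s [V sv]]]] := skinny_svd_exists A'.
have [_ VV _ eA] := sv.
have feas' : feasU X (V *m V^T) 0 E'.
  rewrite /feasU XAE addrK mul0mx addr0 {1 2}eA.
  by rewrite mulmxA -(mulmxA _ V^T V) VV mulmx1.
apply: (le_trans (objP_le_objU feas)); apply: (le_trans (Uopt _ _ _ feas')).
by rewrite /objU /objP nucnorm_orthoproj // nucnorm0 addr0 (rank_svd sv).
Qed.

End RobustPCA.

Theorem theorem4 (R : rcfType) (m n : nat) (X : 'M[R]_(m, n)) (lam : R)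
  (f : 'M[R]_(m, n) -> R) (hlam : 0 < lam) :
  (* (i) *)
  (forall (Astar Estar : 'M[R]_(m, n)), minimizer_P X lam f Astar Estar ->
   forall (r : nat) (U : 'M[R]_(m, r)) (s : 'rV[R]_r) (V : 'M[R]_(n, r)),
     r = \rank Astar -> is_skinny_svd Astar U s V ->
   forall W : 'M[R]_r,
     (forall i j : 'I_r, s 0 i != s 0 j -> W i j = 0) ->
     psd W -> psd (1%:M - W) ->
     minimizer_U X lam f (V *m W *m V^T) (U *m (1%:M - W) *m U^T) Estar)
  /\
  (* (ii) *)
  (forall (Z : 'M[R]_n) (L : 'M[R]_m) (E : 'M[R]_(m, n)),
     minimizer_U X lam f Z L E -> minimizer_P X lam f (X - E) E).
Proof.
split; last exact: latlrr_minimizer_rpca.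
by move=> As Es Aopt r U s V _ sv W; exact: rpca_minimizer_latlrr Aopt sv.
Qed.
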